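(* Let $\mathbf{P}_A,\mathbf{P}_B,\mathbf{Q}_A,\mathbf{Q}_B\in\mathbb{R}^{n\times n}$ be symmetric positive definite and, for $\omega\in[0,1]$, $\bar\omega=1-\omega$, let $\mathbf{H}_{\mathrm{SCI}}(\omega)=\omega(\mathbf{P}_A+\omega\mathbf{Q}_A)^{-1}+\bar\omega(\mathbf{P}_B+\bar\omega\mathbf{Q}_B)^{-1}$. Then for all $\omega\in[0,1]$, the second derivative satisfies $\mathbf{H}_{\mathrm{SCI}}''(\omega)\prec0$.
   Context: $\prec 0$ means negative definite; the derivative is taken with respect to $\omega$. *)

From HB Require Import structures.
From mathcomp Require Import all_boot all_order all_algebra.
From mathcomp Require Import all_classical all_reals all_analysis.
Set Implicit Arguments. Unset Strict Implicit. Unset Printing Implicit Defensive.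
Import Order.TTheory GRing.Theory Num.Theory.
Import numFieldNormedType.Exports.
Local Open Scope ring_scope.

Definition posdef (R : realType) (n : nat) (M : 'M[R]_n) : Prop :=
  M^T = M /\ forall x : 'rV[R]_n, x != 0 -> 0 < (x *m M *m x^T) 0 0.

Definition negdef (R : realType) (n : nat) (M : 'M[R]_n) : Prop :=
  M^T = M /\ forall x : 'rV[R]_n, x != 0 -> (x *m M *m x^T) 0 0 < 0.

Definition H_SCI (R : realType) (n : nat) (PA PB QA QB : 'M[R]_n) (w : R)
  : 'M[R]_n :=
  w *: invmx (PA + w *: QA) + (1 - w) *: invmx (PB + (1 - w) *: QB).

From HB Require Import structures.
From mathcomp Require Import all_boot all_order all_algebra.
From mathcomp Require Import all_classical all_reals all_analysis.
From mathcomp Require Import perm ring lra.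
Import Order.TTheory GRing.Theory Num.Theory.
Import numFieldNormedType.Exports.
Local Open Scope ring_scope.

(* With N := (P + w Q)^-1 one has N' = - N Q N, hence
   (w N)'' = - 2 (N Q N - w N Q N Q N) = - 2 N S N  where  S := Q - w Q N Q.
   Since Z := N P = 1 - w N Q, the matrix S splits as
   Z^T Q Z + w (N Q)^T P (N Q): the first term is positive on vectors outside
   ker Z^T and the second on ker Z^T \ 0, so S, and hence N S N, is positive
   definite for w >= 0.  The term of H_SCI in 1 - w contributes the same
   expression evaluated at 1 - w, by the chain rule. *)

Section MatrixDerive.
Context {R : realFieldType} {V : normedModType R}.

Lemma is_derive_mxP m k (M : V -> 'M[R]_(m, k)) x v dM :
  is_derive x v M dM <-> forall i j, is_derive x v (fun y => M y i j) (dM i j).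
Proof.
split=> [[dMx <-] i j | dMij].
  have dMij := (derivable_mxP M x v).1 dMx i j.
  by apply: DeriveDef => //; rewrite derive_mx // mxE.
have dMx : derivable M x v by apply/derivable_mxP => i j; have [] := dMij i j.
apply: DeriveDef => //; apply/matrixP => i j.
by rewrite derive_mx // mxE derive_val.
Qed.

Lemma is_derive_mulmx {m k p} {f : V -> 'M[R]_(m, k)} {g : V -> 'M[R]_(k, p)}
    {x v df dg} :
  is_derive x v f df -> is_derive x v g dg ->
  is_derive x v (fun y => f y *m g y) (df *m g x + f x *m dg).
Proof.
move=> /is_derive_mxP dfij /is_derive_mxP dgij; apply/is_derive_mxP => i j.
have -> : (fun y => (f y *m g y) i j) =
    \sum_(l < k) ((fun y => f y i l) * (fun y => g y l j)).
  by apply/funext => y; rewrite mxE fct_sumE.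
apply: is_derive_eq
  (is_derive_sum (fun l => is_deriveM (dfij i l) (dgij l j))) _.
rewrite !mxE -big_split; apply: eq_bigr => l _ /=.
by rewrite addrC; congr (_ + _); exact: mulrC.
Qed.

Lemma is_derive_scalemx {m k} {a : V -> R} {f : V -> 'M[R]_(m, k)} {x v da df} :
  is_derive x v a da -> is_derive x v f df ->
  is_derive x v (fun y => a y *: f y) (da *: f x + a x *: df).
Proof.
move=> dax /is_derive_mxP dfij; apply/is_derive_mxP => i j.
have -> : (fun y => (a y *: f y) i j) = a * (fun y => f y i j).
  by apply/funext => y; rewrite mxE.
apply: is_derive_eq (is_deriveM dax (dfij i j)) _.
by rewrite !mxE addrC; congr (_ + _); exact: mulrC.
Qed.

Lemma derivable_det n (M : V -> 'M[R]_n) x v :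
  derivable M x v -> derivable (fun y => \det (M y)) x v.
Proof.
move=> /derivable_mxP dM.
have -> : (fun y => \det (M y)) =
    \sum_(s : 'S_n) (cst ((-1) ^+ s) * \prod_i (fun y => M y i (s i))).
  apply/funext => y; rewrite fct_sumE; apply: eq_bigr => s _.
  by rewrite /= fct_prodE.
apply: (big_ind (fun f => derivable f x v)) => [|f g|s _].
- exact: (derivable_cst (0 : R)).
- exact: derivableD.
apply: derivableM; first exact: derivable_cst.
apply: (big_ind (fun f => derivable f x v)) => [|f g|i _].
- exact: (derivable_cst (1 : R)).
- exact: derivableM.
- exact: dM.
Qed.

Lemma derivable_adj n (M : V -> 'M[R]_n) x v :
  derivable M x v -> derivable (fun y => \adj (M y)) x v.
Proof.
move=> /derivable_mxP dM; apply/derivable_mxP => i j.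
have -> : (fun y => \adj (M y) i j) =
    cst ((-1) ^+ (j + i)) * (fun y => \det (row' j (col' i (M y)))).
  by apply/funext => y; rewrite mxE.
apply: derivableM; first exact: derivable_cst.
apply: derivable_det; apply/derivable_mxP => k l.
have -> : (fun y => row' j (col' i (M y)) k l) =
    (fun y => M y (lift j k) (lift i l)).
  by apply/funext => y; rewrite !mxE.
exact: dM.
Qed.

End MatrixDerive.

Section InvmxDerive.
Context {R : realFieldType} {n : nat}.
Implicit Types M : R -> 'M[R]_n.

Lemma near_unitmx {M} {t : R} :
  derivable M t 1 -> M t \in unitmx -> \forall y \near t, M y \in unitmx.
Proof.
move=> /derivable_det /derivable1_diffP /differentiable_continuous det_cont.
rewrite unitmxE unitfE => det_neq0.
near=> y; rewrite unitmxE unitfE; near: y.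
exact: cvgr_neq0 det_cont det_neq0.
Unshelve. all: by end_near. Qed.

Lemma derivable_invmx {M} {t : R} :
  derivable M t 1 -> M t \in unitmx -> derivable (fun y => invmx (M y)) t 1.
Proof.
move=> dM Mt_unit; apply/derivable_mxP => i j.
apply: (@near_eq_derivable _ _ _
    ((fun y => (\det (M y))^-1) * (fun y => \adj (M y) i j))).
  near=> y; have My_unit : M y \in unitmx by near: y; exact: near_unitmx.
  by rewrite /invmx My_unit [RHS]mxE.
apply: derivableM.
  by apply: derivableV; [rewrite -unitfE -unitmxE | exact: derivable_det].
by move: i j; apply/derivable_mxP; exact: derivable_adj.
Unshelve. all: by end_near. Qed.

Lemma is_derive_invmx M (t : R) (dM : 'M[R]_n) :
  is_derive t 1 M dM -> M t \in unitmx ->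
  is_derive t 1 (fun y => invmx (M y)) (- (invmx (M t) *m dM *m invmx (M t))).
Proof.
move=> [dM_ <-] Mt_unit.
have dN := derivableP (derivable_invmx dM_ Mt_unit).
have NM_cst : \near t, cst 1%:M t = invmx (M t) *m M t.
  by apply: filterS (near_unitmx dM_ Mt_unit) => y My_unit; rewrite mulVmx.
have [_] := is_derive_mulmx dN (derivableP dM_).
rewrite -(near_eq_derive _ NM_cst) derive_cst => /esym/eqP.
rewrite addr_eq0 => /eqP DN_M; split; first by case: dN.
by rewrite -[LHS](mulmxK Mt_unit) DN_M mulNmx.
Qed.

End InvmxDerive.

Lemma is_derive1_comp {R : realFieldType} {W : normedModType R}
    {f : R -> W} {g : R -> R} {t dg : R} {df : W} :
  is_derive t 1 g dg -> is_derive (g t) 1 f df ->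
  is_derive t 1 (f \o g) (dg *: df).
Proof.
move=> [/derivable1_diffP dg_ <-] [/derivable1_diffP df_ <-].
have dfg : differentiable (f \o g) t by exact: differentiable_comp.
apply: DeriveDef; first exact/derivable1_diffP.
rewrite -derive1E derive1E' // diff_comp // -!derive1E !derive1E' //=.
by rewrite -[X in 'd _ _ X = _]mulr1 [LHS]linearZ.
Qed.

Lemma is_derive_derive1 {R : realFieldType} {W : normedModType R}
    {f df : R -> W} {t : R} {d2f : W} :
  (\forall y \near t, is_derive (y : R) 1 f (df y)) -> is_derive t 1 df d2f ->
  is_derive t 1 (derive1 f) d2f.
Proof.
move=> dfy d2; apply: near_eq_is_derive d2; apply: filterS dfy => y [_ Df].
by rewrite derive1E Df.
Qed.

Section InversePencil.
Context {R : realFieldType} {n : nat}.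
Variables P Q : 'M[R]_n.
Local Notation N y := (invmx (P + y *: Q)).

Lemma is_derive_pencil (t : R) : is_derive t 1 (fun y => P + y *: Q) Q.
Proof.
have -> : (fun y => P + y *: Q) = cst P + (fun y => id y *: cst Q y) by [].
apply: is_derive_eq
  (is_deriveD (is_derive_cst P t 1)
     (is_derive_scalemx (is_derive_id t 1) (is_derive_cst Q t 1))) _.
by rewrite scale1r scaler0 add0r addr0.
Qed.

Lemma is_derive_invpencil {t : R} : P + t *: Q \in unitmx ->
  is_derive t 1 (fun y => N y) (- (N t *m Q *m N t)).
Proof. exact: is_derive_invmx (is_derive_pencil t). Qed.

Lemma is_derive_scaled_invpencil {t : R} : P + t *: Q \in unitmx ->
  is_derive t 1 (fun y => y *: N y) (N t - t *: (N t *m Q *m N t)).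
Proof.
move=> unit_t.
apply: is_derive_eq
  (is_derive_scalemx (is_derive_id t 1) (is_derive_invpencil unit_t)) _.
by rewrite scale1r scalerN.
Qed.

Lemma is_derive_derive_scaled_invpencil {t : R} : P + t *: Q \in unitmx ->
  is_derive t 1 (fun y => N y - y *: (N y *m Q *m N y))
    (- 2 *: (N t *m Q *m N t - t *: (N t *m Q *m N t *m Q *m N t))).
Proof.
move=> unit_t; have dN := is_derive_invpencil unit_t.
have dK := is_derive_mulmx (is_derive_mulmx dN (is_derive_cst Q t 1)) dN.
apply: is_derive_eq (is_deriveB dN (is_derive_scalemx (is_derive_id t 1) dK)) _.
rewrite /cst mulmx0 addr0 !mulNmx !mulmxN !mulmxA scale1r.
move: (N t *m Q *m N t) (N t *m Q *m N t *m Q *m N t) => K X.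
by apply/matrixP => i j; rewrite !mxE; ring.
Qed.

End InversePencil.

Section PositiveDefinite.
Context {R : realType} {n : nat}.
Implicit Types (A B P Q : 'M[R]_n) (x : 'rV[R]_n).

Lemma quad_formD x A B :
  (x *m (A + B) *m x^T) 0 0 = (x *m A *m x^T) 0 0 + (x *m B *m x^T) 0 0.
Proof. by rewrite mulmxDr mulmxDl mxE. Qed.

Lemma quad_formZ x a A : (x *m (a *: A) *m x^T) 0 0 = a * (x *m A *m x^T) 0 0.
Proof. by rewrite -scalemxAr -scalemxAl mxE. Qed.

Lemma posdef_form_ge0 {A} x : posdef A -> 0 <= (x *m A *m x^T) 0 0.
Proof.
move=> [_ A_pos]; have [->|x_neq0] := eqVneq x 0; last exact/ltW/A_pos.
by rewrite !mul0mx mxE.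
Qed.

Lemma posdef_unitmx {A} : posdef A -> A \in unitmx.
Proof.
move=> [_ A_pos]; rewrite unitmxE unitfE; apply/negP => /det0P[x x_neq0 xA0].
by have := A_pos x x_neq0; rewrite xA0 mul0mx mxE ltxx.
Qed.

Lemma posdefD {A B} : posdef A -> posdef B -> posdef (A + B).
Proof.
move=> [AT A_pos] [BT B_pos]; split; first by rewrite linearD /= AT BT.
by move=> x x_neq0; rewrite quad_formD addr_gt0 ?A_pos ?B_pos.
Qed.

Lemma posdefZ {a A} : 0 < a -> posdef A -> posdef (a *: A).
Proof.
move=> a_gt0 [AT A_pos]; split; first by rewrite linearZ /= AT.
by move=> x x_neq0; rewrite quad_formZ mulr_gt0 ?A_pos.
Qed.

Lemma negdefN {A} : posdef A -> negdef (- A).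
Proof.
move=> [AT A_pos]; split; first by rewrite linearN /= AT.
by move=> x x_neq0; rewrite mulmxN mulNmx mxE oppr_lt0 A_pos.
Qed.

Lemma posdef_pencil {P Q w} :
  posdef P -> posdef Q -> 0 <= w -> posdef (P + w *: Q).
Proof.
move=> [PT P_pos] Q_pd w_ge0.
split; first by rewrite linearD linearZ /= PT Q_pd.1.
move=> x x_neq0; rewrite quad_formD quad_formZ.
have := P_pos x x_neq0; have := mulr_ge0 w_ge0 (posdef_form_ge0 x Q_pd); lra.
Qed.

Lemma quad_form_congr x A B :
  x *m (B^T *m A *m B) *m x^T = (x *m B^T) *m A *m (x *m B^T)^T.
Proof. by rewrite trmx_mul trmxK !mulmxA. Qed.

Lemma posdef_congr {A B} : posdef A -> B \in unitmx -> posdef (B^T *m A *m B).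
Proof.
move=> [AT A_pos] B_unit; split; first by rewrite !trmx_mul trmxK AT mulmxA.
move=> x x_neq0; have xB_neq0 : x *m B^T != 0.
  apply: contraNneq x_neq0 => xB0.
  by rewrite -[x](mulmxK (_ : B^T \in unitmx)) ?unitmx_tr // xB0 mul0mx.
by rewrite quad_form_congr A_pos.
Qed.

Lemma posdef_pencil_schur {P Q w} : posdef P -> posdef Q -> 0 <= w ->
  posdef (Q - w *: (Q *m invmx (P + w *: Q) *m Q)).
Proof.
move=> P_pd Q_pd w_ge0; have PQ_pd := posdef_pencil P_pd Q_pd w_ge0.
set N := invmx (P + w *: Q).
have NT : N^T = N by rewrite trmx_inv PQ_pd.1.
set Z := 1%:M - w *: (N *m Q).
have NP : N *m P = Z.
  by rewrite /Z -(mulVmx (posdef_unitmx PQ_pd)) mulmxDr -scalemxAr addrK.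
have QZ : Q - w *: (Q *m N *m Q) = Q *m Z.
  by rewrite /Z mulmxBr mulmx1 -scalemxAr mulmxA.
have ZTQ : Z^T *m Q = Q *m Z.
  rewrite /Z linearB linearZ /= trmx1 trmx_mul NT Q_pd.1.
  by rewrite mulmxBl mul1mx -scalemxAl -mulmxA -QZ -mulmxA.
have decomp : Q - w *: (Q *m N *m Q) =
    Z^T *m Q *m Z + w *: ((N *m Q)^T *m P *m (N *m Q)).
  rewrite ZTQ QZ trmx_mul NT Q_pd.1 -(mulmxA Q N P) NP.
  by rewrite scalemxAr -mulmxDr /Z subrK mulmx1.
split; first by rewrite linearB linearZ /= !trmx_mul NT Q_pd.1 mulmxA.
move=> x x_neq0; rewrite decomp quad_formD quad_formZ !quad_form_congr.
have [xZ0|xZ_neq0] := eqVneq (x *m Z^T) 0.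
  have xZ : x *m Z^T = x - w *: (x *m (N *m Q)^T).
    by rewrite /Z linearB /= linearZ /= trmx1 mulmxBr mulmx1 scalemxAr.
  have x_eq : x = w *: (x *m (N *m Q)^T) by apply/subr0_eq; rewrite -xZ.
  have w_neq0 : w != 0.
    by apply: contraNneq x_neq0 => w0; rewrite x_eq w0 scale0r.
  have xNQ_neq0 : x *m (N *m Q)^T != 0.
    by apply: contraNneq x_neq0 => xNQ0; rewrite x_eq xNQ0 scaler0.
  rewrite xZ0 mul0mx mul0mx mxE add0r mulr_gt0 ?P_pd.2 //.
  by rewrite lt_def w_neq0.
have := Q_pd.2 _ xZ_neq0; have := posdef_form_ge0 (x *m (N *m Q)^T) P_pd.
have := w_ge0; nra.
Qed.

Lemma posdef_pencil_curvature {P Q w} : posdef P -> posdef Q -> 0 <= w ->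
  let N := invmx (P + w *: Q) in
  posdef (N *m Q *m N - w *: (N *m Q *m N *m Q *m N)).
Proof.
move=> P_pd Q_pd w_ge0 N; have PQ_pd := posdef_pencil P_pd Q_pd w_ge0.
have -> : N *m Q *m N - w *: (N *m Q *m N *m Q *m N) =
    N^T *m (Q - w *: (Q *m N *m Q)) *m N.
  by rewrite trmx_inv PQ_pd.1 mulmxBr mulmxBl -scalemxAr -scalemxAl !mulmxA.
apply: posdef_congr (posdef_pencil_schur P_pd Q_pd w_ge0) _.
by rewrite unitmx_inv posdef_unitmx.
Qed.

End PositiveDefinite.

Theorem lemma3 (R : realType) (n : nat) (PA PB QA QB : 'M[R]_n) :
  posdef PA -> posdef PB -> posdef QA -> posdef QB ->
  forall w : R, 0 <= w <= 1 ->
    let H := H_SCI PA PB QA QB in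
    [/\ derivable H w 1, derivable (derive1 H) w 1 & negdef (derive1 (derive1 H) w)].
Proof.
move=> PA_pd PB_pd QA_pd QB_pd w /andP[w_ge0 w_le1] H.
have onem_ge0 : 0 <= 1 - w by rewrite subr_ge0.
have unitA := posdef_unitmx (posdef_pencil PA_pd QA_pd w_ge0).
have unitB := posdef_unitmx (posdef_pencil PB_pd QB_pd onem_ge0).
have onem_derive y : is_derive (y : R) 1 (fun u => 1 - u) (-1).
  exact: is_derive_eq
    (is_deriveB (is_derive_cst (1 : R) y 1) (is_derive_id y 1)) (sub0r 1).
have near_unitA : \forall y \near w, PA + y *: QA \in unitmx.
  by have [dMA _] := is_derive_pencil PA QA w; exact: near_unitmx dMA unitA.
have near_unitB : \forall y \near w, PB + (1 - y) *: QB \in unitmx.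
  have [dMB _] :=
    is_derive1_comp (onem_derive w) (is_derive_pencil PB QB (1 - w)).
  exact: near_unitmx dMB unitB.
pose dF (P Q : 'M[R]_n) (y : R) :=
  invmx (P + y *: Q) - y *: (invmx (P + y *: Q) *m Q *m invmx (P + y *: Q)).
have dH : \forall y \near w,
    is_derive (y : R) 1 H (dF PA QA y - dF PB QB (1 - y)).
  near=> y; apply: is_derive_eq.
    apply: is_deriveD (is_derive_scaled_invpencil PA QA _)
      (is_derive1_comp (onem_derive y) (is_derive_scaled_invpencil PB QB _)).
    + by near: y.
    + by near: y.
  by rewrite scaleN1r.
have [d2H_w D2H_w] := is_derive_derive1 dH
  (is_deriveB (is_derive_derive_scaled_invpencil PA QA unitA)
     (is_derive1_comp (onem_derive w)
        (is_derive_derive_scaled_invpencil PB QB unitB))).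
have [dH_w _] := nbhs_singleton dH.
split; [exact: dH_w | exact: d2H_w |].
rewrite derive1E D2H_w scaleN1r opprK -scalerDr scaleNr.
apply/negdefN/(posdefZ (ltr0Sn _ 1))/posdefD.
  exact: posdef_pencil_curvature PA_pd QA_pd w_ge0.
exact: posdef_pencil_curvature PB_pd QB_pd onem_ge0.
Unshelve. all: by end_near. Qed.
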